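(* Let $\mathcal F'=(\mathcal A',U,\varphi)$ be a weakening of a sequential formalism $\mathcal F=(\mathcal A,U,\varphi)$ and let $\mathcal S$ be a subset of $\mathcal A$. If $\mathcal S$ is algebraically tractable for $\mathcal F'$, then $\mathcal S$ is algebraically tractable for $\mathcal F$.
   Context: A finite non-associative algebra is a tuple $(\mathcal A,\cup,\neg,\emptyset,\mathcal B,\diamond,\overline{\cdot},e)$ where $(\mathcal A,\cup,\neg,\emptyset,\mathcal B)$ is a finite Boolean algebra and for all $x,y,z$: $\overline{\overline x}=x$, $\overline{x\cup y}=\overline x\cup\overline y$, $\overline{x\diamond y}=\overline y\diamond\overline x$, $e\diamond x=x\diamond e=x$, $x\diamond(y\cup z)=(x\diamond y)\cup(x\diamond z)$, $(x\diamond y)\cap\overline z=\emptyset\iff(y\diamond z)\cap\overline x=\emptyset$. $r\subseteq r'$ means $r\cup r'=r'$; atoms are basic relations. A projection operator from $\mathcal A$ to $\mathcal A'$ is a map $\Rsh$ with $\Rsh(r\cup r')=\Rsh r\cup\Rsh r'$ and $\Rsh\overline r=\overline{\Rsh r}$. A finite multi-algebra is a product $\mathcal A_1\times\cdots\times\mathcal A_m$ of finite non-associative algebras with projection operators $\Rsh_i^j:\mathcal A_i\to\mathcal A_j$ for distinct $i,j$. Relations $R=(R_1,\dots,R_m)$; basic if all $R_i$ are atoms; universal $\mathcal B=(\mathcal B_1,\dots,\mathcal B_m)$; operations and $\subseteq$ componentwise; $B\in R$ means $B$ basic, $B\subseteq R$. The projection closure $\Rsh R$ is obtained by repeatedly replacing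 $R_j$ by $R_j\cap\Rsh_i^jR_i$ until a fixed point. A sequential formalism is $(\mathcal A,U,\varphi)$ with $\mathcal A$ a finite multi-algebra, $U\ne\emptyset$, $\varphi:\mathcal A\to 2^{U\times U}$ satisfying $\varphi(\Rsh R)=\varphi(R)$, $\varphi(\overline R)=\varphi(R)^{-1}$, $\varphi((\emptyset,\dots,\emptyset))=\emptyset$, $\varphi(R\diamond R')\supseteq(\varphi(R)\circ\varphi(R'))\cap\varphi(\mathcal B)$, $\varphi(R\cap R')=\varphi(R)\cap\varphi(R')$, $\varphi(R)=\bigcup_{B\in R}\varphi(B)$. A multi-algebra $\mathcal A'$ is a weakening of $\mathcal A$ if it has the same Cartesian product (same algebras and operations) and its projections satisfy $\Rsh_i^jb\subseteq\Rsh_i'^jb$ for all distinct $i,j$ and all atoms $b$ of $\mathcal A_i$ (with $\Rsh$ those of $\mathcal A$, $\Rsh'$ those of $\mathcal A'$); then $(\mathcal A',U,\varphi)$ is called a weakening of $(\mathcal A,U,\varphi)$. A network over $\mathcal S$ is a finite set $E$ of variables with $N^{xy}\in\mathcal S$ for distinct $x,y$, $N^{yx}=\overline{N^{xy}}$; it is satisfiable if there is $(u_x)_{x\in E}\subseteq U$ with $(u_x,u_y)\in\varphi(N^{xy})$ for all distinct $x,y$; trivially inconsistent if some component of some $N^{xy}$ is $\emptyset$. The algebraic closure of $N$ for a formalism is obtained by repeatedly applying $N^{xz}\leftarrow\Rsh N^{xz}$ (projection closure of that formalism's multi-algebra) and $N^{xz}\leftarrow N^{xz}\cap(N^{xy}\diamond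 N^{yz})$ until a fixed point. $\mathcal S$ is algebraically tractable for a formalism if every network over $\mathcal S$ is satisfiable iff its algebraic closure for that formalism is not trivially inconsistent. *)

From Stdlib Require Import Relations.
From mathcomp Require Import all_boot.
Set Implicit Arguments. Unset Strict Implicit. Unset Printing Implicit Defensive.

(* A finite Boolean algebra is represented as the powerset algebra {set T} of
   a finite type T (every finite Boolean algebra is of this form):
   union :|:, complement ~:, empty set0, universal setT. *)

Record nalg (T : finType) := NAlg {
  conv : {set T} -> {set T};
  comp : {set T} -> {set T} -> {set T};
  ident : {set T} }.

Definition nalg_axioms (T : finType) (A : nalg T) : Prop :=
  (forall x, conv A (conv A x) = x) /\
  (forall x y, conv A (x :|: y) = conv A x :|: conv A y) /\
  (forall x y, conv A (comp A x y) = comp A (conv A y) (conv A x)) /\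
  (forall x, comp A (ident A) x = x /\ comp A x (ident A) = x) /\
  (forall x y z, comp A x (y :|: z) = comp A x y :|: comp A x z) /\
  (forall x y z, (comp A x y :&: conv A z == set0) = (comp A y z :&: conv A x == set0)).

Definition atom (T : finType) (r : {set T}) : Prop :=
  r != set0 /\ forall r', r' \subset r -> r' = set0 \/ r' = r.

Definition multirel (m : nat) (T : 'I_m -> finType) := forall i : 'I_m, {set T i}.
Definition projs (m : nat) (T : 'I_m -> finType) :=
  forall i j : 'I_m, {set T i} -> {set T j}.

Section MA.
Variables (m : nat) (T : 'I_m -> finType) (alg : forall i, nalg (T i)).

Definition is_projection (i j : 'I_m) (f : {set T i} -> {set T j}) : Prop :=
  (forall r r', f (r :|: r') = f r :|: f r') /\
  (forall r, f (conv (alg i) r) = conv (alg j) (f r)).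

(* (alg, P) is a finite multi-algebra (projections only matter for i != j). *)
Definition multialgebra (P : projs T) : Prop :=
  (forall i, nalg_axioms (alg i)) /\
  (forall i j, i != j -> is_projection (P i j)).

Definition mconv (R : multirel T) : multirel T := fun i => conv (alg i) (R i).
Definition mcomp (R R' : multirel T) : multirel T := fun i => comp (alg i) (R i) (R' i).
Definition minter (R R' : multirel T) : multirel T := fun i => R i :&: R' i.
Definition msub (R R' : multirel T) : Prop := forall i, R i \subset R' i.
Definition mempty : multirel T := fun i => set0.
Definition muniv : multirel T := fun i => setT.
Definition basic (B : multirel T) : Prop := forall i, atom (B i).

Definition pstep (P : projs T) (R R' : multirel T) : Prop :=
  exists i j, i != j /\ R' = (fun k => if k == j then R k :&: P i k (R i) else R k).

Definition pfixed (P : projs T) (R : multirel T) : Prop :=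
  forall i j, i != j -> R j :&: P i j (R i) = R j.

Definition pclosure (P : projs T) (R R' : multirel T) : Prop :=
  clos_refl_trans _ (pstep P) R R' /\ pfixed P R'.

Definition rel_eq (U : Type) (a b : U -> U -> Prop) := forall u v, a u v <-> b u v.

Definition seq_formalism (P : projs T) (U : Type)
  (phi : multirel T -> U -> U -> Prop) : Prop :=
  multialgebra P /\ inhabited U /\
  (forall R R', pclosure P R R' -> rel_eq (phi R') (phi R)) /\
  (forall R, rel_eq (phi (mconv R)) (fun u v => phi R v u)) /\
  (forall u v, ~ phi mempty u v) /\
  (forall R R' u w v, phi R u w -> phi R' w v -> phi muniv u v ->
      phi (mcomp R R') u v) /\
  (forall R R', rel_eq (phi (minter R R')) (fun u v => phi R u v /\ phi R' u v)) /\
  (forall R, rel_eq (phi R) (fun u v => exists B, basic B /\ msub B R /\ phi B u v)).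

Definition weakening (P P' : projs T) : Prop :=
  multialgebra P' /\
  forall i j, i != j -> forall b, atom b -> P i j b \subset P' i j b.

Definition network (S : multirel T -> Prop) (E : finType) (N : E -> E -> multirel T) : Prop :=
  forall x y, x != y -> S (N x y) /\ N y x = mconv (N x y).

Definition satisfiable (U : Type) (phi : multirel T -> U -> U -> Prop)
  (E : finType) (N : E -> E -> multirel T) : Prop :=
  exists u : E -> U, forall x y, x != y -> phi (N x y) (u x) (u y).

Definition triv_inconsistent (E : finType) (N : E -> E -> multirel T) : Prop :=
  exists x y, x != y /\ exists i, N x y i = set0.

(* Update N^{xz} to R (and N^{zx} to its converse, keeping a network). *)
Definition nupd (E : finType) (N : E -> E -> multirel T) (x z : E) (R : multirel T) :=
  fun a b => if (a == x) && (b == z) then R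
             else if (a == z) && (b == x) then mconv R else N a b.

Definition nstep (P : projs T) (E : finType) (N N' : E -> E -> multirel T) : Prop :=
  (exists x z R, x != z /\ pclosure P (N x z) R /\ N' = nupd N x z R) \/
  (exists x y z, [/\ x != y, y != z, x != z &
     N' = nupd N x z (minter (N x z) (mcomp (N x y) (N y z)))]).

Definition nfixed (P : projs T) (E : finType) (N : E -> E -> multirel T) : Prop :=
  (forall x z, x != z -> pfixed P (N x z)) /\
  (forall x y z, x != y -> y != z -> x != z ->
     minter (N x z) (mcomp (N x y) (N y z)) = N x z).

Definition aclosure (P : projs T) (E : finType) (N N' : E -> E -> multirel T) : Prop :=
  clos_refl_trans _ (@nstep P E) N N' /\ nfixed P N'.

Definition alg_tractable (P : projs T) (U : Type) (phi : multirel T -> U -> U -> Prop)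
  (S : multirel T -> Prop) : Prop :=
  forall (E : finType) (N : E -> E -> multirel T), network S N ->
  forall N', aclosure P N N' -> (satisfiable phi N <-> ~ triv_inconsistent N').

End MA.

From Pilot Require Import Defs.
From Stdlib Require Import Relations FunctionalExtensionality Classical.
From mathcomp Require Import all_boot.

Set Implicit Arguments.
Unset Strict Implicit.
Unset Printing Implicit Defensive.

(* A solution of N solves every network met while computing its closure, and
   phi is empty on relations with an empty component; this gives one direction
   without any tractability.  Conversely, let N' be the closure of N for the
   projections P and run the closure for the weaker P' from N.  Projections are
   unions of their values on atoms, so P i j A \subset P' i j A for A nonempty;
   as N' is a fixed point of the P-rules with nonempty components, every P'-step
   keeps N' below the current network.  Hence the P'-closure contains N', is not
   trivially inconsistent, and N is satisfiable by tractability for P'. *)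

Lemma clos_rt_invariant (A : Type) (step : relation A) (I : A -> Prop) :
  (forall a b, step a b -> I a -> I b) ->
  forall a b, clos_refl_trans A step a b -> I a -> I b.
Proof. by move=> stepI a b; elim=> [x y /stepI | // | x y z _ Ixy _ Iyz /Ixy/Iyz]. Qed.

Lemma clos_rt_normal_form (A : Type) (step : relation A) (I normal : A -> Prop)
    (size : A -> nat) :
  (forall a, I a -> ~ normal a -> exists b, [/\ step a b, I b & size b < size a]) ->
  forall a, I a -> exists b, clos_refl_trans A step a b /\ normal b.
Proof.
move=> progress a; have [n] := ubnP (size a); elim: n a => // n IH a.
rewrite ltnS => le_a_n Ia.
have [normal_a | /(progress a Ia) [b [ab Ib lt_ba]]] := classic (normal a).
  by exists a; split; first exact: rt_refl.
have [c [bc normal_c]] := IH b (leq_trans lt_ba le_a_n) Ib.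
by exists c; split; first exact: rt_trans (rt_step _ _ _ _ ab) bc.
Qed.

Lemma ltn_sum_strict (I : finType) (F G : I -> nat) i0 :
  (forall i, F i <= G i) -> F i0 < G i0 -> \sum_i F i < \sum_i G i.
Proof.
move=> leFG ltFG0; rewrite (ltn_leqif (leqif_sum (fun i _ => leqif_eq (leFG i)))).
by apply/forallPn; exists i0; rewrite neq_ltn ltFG0.
Qed.

(* [atom] quantifies over predicates rather than sets, hence the extensionality. *)
Lemma atom_set1 (T : finType) (t : T) : atom [set t].
Proof.
split; first by apply/set0Pn; exists t; rewrite set11.
move=> r /subsetP r_t.
have [[s rs] | r0] := classic (exists s, r s); [right | left];
  apply: functional_extensionality => x; apply/idP/idP.
- exact: r_t.
- by move=> /set1P ->; have /set1P <- := r_t s rs.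
- by move=> rx; case: r0; exists x.
- by move=> /(@idP (x \in set0)); rewrite inE.
Qed.

Section SetUMorphism.
Variables (T1 T2 : finType).
Implicit Types f g : {set T1} -> {set T2}.

Lemma morph_setU_subset f :
  {morph f : A B / A :|: B} -> {homo f : A B / A \subset B}.
Proof. by move=> fU A B /setUidPr <-; rewrite fU subsetUl. Qed.

Lemma morph_setU_subset_nonempty f g :
  {morph f : A B / A :|: B} -> {morph g : A B / A :|: B} ->
  (forall t, f [set t] \subset g [set t]) ->
  forall A, A != set0 -> f A \subset g A.
Proof.
move=> fU gU fg1 A; have [n] := ubnP #|A|; elim: n A => // n IH A lt_A_n.
case/set0Pn => t tA; rewrite -(setD1K tA).
have [-> | neA] := eqVneq (A :\ t) set0; first by rewrite setU0.
have ltA : #|A :\ t| < n by rewrite -ltnS (leq_trans _ lt_A_n) // (cardsD1 t A) tA.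
by rewrite fU gU setUSS // IH.
Qed.

End SetUMorphism.

Section NonAssociativeAlgebra.
Variables (T : finType) (A : nalg T).
Hypothesis HA : nalg_axioms A.

Lemma convK : involutive (conv A).
Proof. exact: HA.1. Qed.

Lemma conv_subset : {homo conv A : X Y / X \subset Y}.
Proof. exact/morph_setU_subset/HA.2.1. Qed.

Lemma comp_subset (X X' Y Y' : {set T}) :
  X \subset X' -> Y \subset Y' -> Defs.comp A X Y \subset Defs.comp A X' Y'.
Proof.
have [_ [_ [conv_comp [_ [compDr _]]]]] := HA.
have compr Z : {homo Defs.comp A Z : Y Y' / Y \subset Y'}.
  exact/morph_setU_subset/compDr.
have compE Z Z' : Defs.comp A Z Z' = conv A (Defs.comp A (conv A Z') (conv A Z)).
  by rewrite conv_comp !convK.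
move=> sX sY; apply: subset_trans (compr X _ _ sY) _.
by rewrite compE [Defs.comp A X' _]compE; apply/conv_subset/compr/conv_subset.
Qed.

End NonAssociativeAlgebra.

Section Networks.
Variables (m : nat) (T : 'I_m -> finType) (alg : forall i, nalg (T i)).
Hypothesis Halg : forall i, nalg_axioms (alg i).

Definition msize (R : multirel T) : nat := \sum_i #|R i|.

Lemma msize_lt (R R' : multirel T) : msub R' R -> R' <> R -> msize R' < msize R.
Proof.
move=> sub neq.
rewrite (ltn_leqif (leqif_sum (fun i _ => leqif_eq (subset_leq_card (sub i))))).
apply/negP => /forallP eq_card; apply: neq; apply: functional_extensionality_dep => i.
by apply/eqP; rewrite eqEcard sub (eqP (eq_card i)) /=.
Qed.

Lemma mconvK (R : multirel T) : mconv alg (mconv alg R) = R.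
Proof. by apply: functional_extensionality_dep => i; apply: convK. Qed.

Lemma mconv_sub (R R' : multirel T) : msub R R' -> msub (mconv alg R) (mconv alg R').
Proof. by move=> sub i; apply: conv_subset. Qed.

Section NetworkUpdate.
Variables (E : finType) (x z : E).
Hypothesis xz : x != z.
Implicit Types (N Q : E -> E -> multirel T) (R : multirel T).

Definition nsym N : Prop := forall a b, a != b -> N b a = mconv alg (N a b).
Definition nsub N N' : Prop := forall a b, msub (N a b) (N' a b).
Definition nsize N : nat := \sum_(p : E * E) msize (N p.1 p.2).

Lemma nsize_lt N N' : nsub N' N -> N' x z <> N x z -> nsize N' < nsize N.
Proof.
move=> sub neq.
have le_msize (p : E * E) : msize (N' p.1 p.2) <= msize (N p.1 p.2).
  by apply: leq_sum => i _; apply/subset_leq_card/sub.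
exact: (ltn_sum_strict (i0 := (x, z)) le_msize (msize_lt (sub x z) neq)).
Qed.

Lemma nupd_xz N R : nupd alg N x z R x z = R.
Proof. by rewrite /nupd !eqxx. Qed.

Lemma nupd_sym N R : nsym N -> nsym (nupd alg N x z R).
Proof.
move=> symN a b; have zx : z != x by rewrite eq_sym.
rewrite /nupd; have [-> | ax] := eqVneq a x; have [-> | bz] := eqVneq b z => ab;
  rewrite ?eqxx ?(negbTE xz) ?(negbTE zx) ?(negbTE ax) ?(negbTE bz) ?andbF ?andbT //=;
  try exact: symN.
by rewrite [(a == z) && _]andbC; case: ifP => _; rewrite ?mconvK // symN.
Qed.

Lemma nupd_id N a b : nsym N -> nupd alg N x z (N x z) a b = N a b.
Proof.
move=> symN; rewrite /nupd.
case: andP => [[/eqP -> /eqP ->] // | _]; case: andP => [[/eqP -> /eqP ->] | _] //.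
exact/esym/symN.
Qed.

Lemma nupd_sub N N' R R' :
  nsub N N' -> msub R R' -> nsub (nupd alg N x z R) (nupd alg N' x z R').
Proof.
move=> sN sR a b; rewrite /nupd.
by case: ifP => _; [|case: ifP => _; [apply: mconv_sub | apply: sN]].
Qed.

Lemma nupd_nsub N R : nsym N -> msub R (N x z) -> nsub (nupd alg N x z R) N.
Proof.
move=> symN sR a b; rewrite -[N a b](nupd_id a b symN).
exact: (nupd_sub (fun c d i => subxx _) sR).
Qed.

Lemma nupd_sup Q N R :
  nsym Q -> nsub Q N -> msub (Q x z) R -> nsub Q (nupd alg N x z R).
Proof.
by move=> symQ sQ sR a b; rewrite -(nupd_id a b symQ); apply: (nupd_sub sQ sR).
Qed.

Lemma nupd_progress N R : nsym N -> msub R (N x z) -> R <> N x z ->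
  nsym (nupd alg N x z R) /\ nsize (nupd alg N x z R) < nsize N.
Proof.
move=> symN sR neR; split; first exact: nupd_sym.
by apply: nsize_lt; [apply: nupd_nsub | rewrite nupd_xz].
Qed.

End NetworkUpdate.

Section Closures.
Variable P : projs T.
Arguments P : clear implicits.

Lemma pstep_sub R R' : pstep P R R' -> msub R' R.
Proof. by case=> i [j [_ ->]] k; case: eqP => _; rewrite ?subsetIl. Qed.

Lemma pclosure_sub R R' : clos_refl_trans _ (pstep P) R R' -> msub R' R.
Proof.
move=> reach; apply: (clos_rt_invariant (I := fun R1 => msub R1 R) _ reach) => // R1 R2.
by move=> /pstep_sub s21 s1 i; apply: subset_trans (s21 i) (s1 i).
Qed.

Lemma pclosure_exists R : exists R', pclosure P R R'.
Proof.
apply: (clos_rt_normal_form (I := fun _ => True) (size := msize)) => // {}R _.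
case/not_all_ex_not => i /not_all_ex_not [j] /(@imply_to_and (i != j)) [ij not_fixed].
pose R1 k := if k == j then R k :&: P i k (R i) else R k.
have step : pstep P R R1 by exists i, j.
exists R1; split=> //; apply: msize_lt; first exact: pstep_sub.
by move/(congr1 (fun R2 : multirel T => R2 j)); rewrite /R1 eqxx.
Qed.

Lemma nstep_sym_sub (E : finType) (N N' : E -> E -> multirel T) :
  nstep alg P N N' -> nsym N -> nsym N' /\ nsub N' N.
Proof.
case=> [[x [z [R [xz [[reach _] ->]]]]] | [x [y [z [_ _ xz ->]]]]] symN.
  by split; [apply: nupd_sym | apply: nupd_nsub (pclosure_sub reach)].
by split; [apply: nupd_sym | apply: nupd_nsub => // i; apply: subsetIl].
Qed.

Lemma aclosure_sym_sub (E : finType) (N N' : E -> E -> multirel T) :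
  clos_refl_trans _ (nstep alg P (E:=E)) N N' -> nsym N -> nsym N' /\ nsub N' N.
Proof.
move=> reach symN.
apply: (clos_rt_invariant (I := fun N1 => nsym N1 /\ nsub N1 N) _ reach).
  move=> N1 N2 /nstep_sym_sub step12 [/step12 [symN2 sub21] sub1].
  by split=> // a b i; apply: subset_trans (sub21 a b i) (sub1 a b i).
by split=> // a b i.
Qed.

Lemma aclosure_exists (E : finType) (N : E -> E -> multirel T) :
  nsym N -> exists N', aclosure alg P N N'.
Proof.
apply: (clos_rt_normal_form (size := @nsize E)) => {}N symN /not_and_or [].
  case/not_all_ex_not => x /not_all_ex_not [z] /(@imply_to_and (x != z)) [xz not_fixed].
  have [R [reach fixedR]] := pclosure_exists (N x z).
  have neR : R <> N x z by move=> eR; apply: not_fixed; rewrite -eR.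
  have [symN1 lt_N1] := nupd_progress xz symN (pclosure_sub reach) neR.
  by exists (nupd alg N x z R); split=> //; left; exists x, z, R.
case/not_all_ex_not => x /not_all_ex_not [y /not_all_ex_not [z]].
case/(@imply_to_and (x != y)) => xy /(@imply_to_and (y != z)) [yz].
case/(@imply_to_and (x != z)) => xz not_fixed.
set R := minter (N x z) (mcomp alg (N x y) (N y z)).
have sub : msub R (N x z) by move=> i; apply: subsetIl.
have [symN1 lt_N1] := nupd_progress xz symN sub not_fixed.
by exists (nupd alg N x z R); split=> //; right; exists x, y, z.
Qed.

End Closures.

Section Soundness.
Variables (P : projs T) (U : Type) (phi : multirel T -> U -> U -> Prop).
Hypothesis HF : seq_formalism alg P phi.

Definition is_solution (E : finType) (N : E -> E -> multirel T) (u : E -> U) : Prop :=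
  forall a b, a != b -> phi (N a b) (u a) (u b).

Lemma phi_sub R R' u v : msub R R' -> phi R u v -> phi R' u v.
Proof.
have [_ [_ [_ [_ [_ [_ [phiI _]]]]]]] := HF.
move=> sub; have <- : minter R R' = R.
  by apply: functional_extensionality_dep => i; apply/setIidPl/sub.
by case/phiI.
Qed.

Lemma phi_nonempty R u v i : phi R u v -> R i != set0.
Proof.
have [_ [_ [_ [_ [_ [_ [_ phiB]]]]]]] := HF.
case/phiB => B [basicB [subB _]]; have [neB _] := basicB i.
by apply: contraNneq neB => Ri0; rewrite -subset0 -Ri0 subB.
Qed.

Lemma is_solution_nupd (E : finType) (N : E -> E -> multirel T) u x z R :
  is_solution N u -> phi R (u x) (u z) -> is_solution (nupd alg N x z R) u.
Proof.
have [_ [_ [_ [phiC _]]]] := HF.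
move=> solN phiR a b ab; rewrite /nupd.
case: andP => [[/eqP -> /eqP ->] // | _]; case: andP => [[/eqP -> /eqP ->] | _].
  exact/phiC.
exact: solN.
Qed.

Lemma nstep_solution (E : finType) (N N' : E -> E -> multirel T) u :
  nstep alg P N N' -> is_solution N u -> is_solution N' u.
Proof.
have [_ [_ [phiP [_ [_ [phiM [phiI _]]]]]]] := HF.
case=> [[x [z [R [xz [reach ->]]]]] | [x [y [z [xy yz xz ->]]]]] solN.
  by apply: is_solution_nupd => //; apply/(phiP _ _ reach)/solN.
apply: is_solution_nupd => //; apply/phiI; split; first exact: solN.
apply: (phiM _ _ _ (u y)); [exact: solN | exact: solN |].
by apply: phi_sub (solN x z xz) => i; apply: subsetT.
Qed.

Lemma aclosure_sound (E : finType) (N N' : E -> E -> multirel T) :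
  satisfiable phi N -> clos_refl_trans _ (nstep alg P (E:=E)) N N' ->
  ~ triv_inconsistent N'.
Proof.
case=> u solN reach [x [y [xy [i N'xy0]]]].
have solN' := clos_rt_invariant (fun N1 N2 => @nstep_solution E N1 N2 u) reach solN.
by have := phi_nonempty i (solN' x y xy); rewrite N'xy0 eqxx.
Qed.

End Soundness.

Section Weakening.
Variables P P' : projs T.
Arguments P : clear implicits.
Arguments P' : clear implicits.
Hypotheses (HP : multialgebra alg P) (HW : weakening alg P P').

Lemma proj_weaken i j (A : {set T i}) :
  i != j -> A != set0 -> P i j A \subset P' i j A.
Proof.
move=> ij; apply: morph_setU_subset_nonempty => [||t].
- exact: (HP.2 i j ij).1.
- exact: (HW.1.2 i j ij).1.
- exact: HW.2 i j ij _ (atom_set1 t).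
Qed.

Lemma pclosure_weaken_sup (Q R R' : multirel T) :
  pfixed P Q -> (forall i, Q i != set0) ->
  clos_refl_trans _ (pstep P') R R' -> msub Q R -> msub Q R'.
Proof.
move=> fixedQ neQ; apply: clos_rt_invariant => R1 _ [i [j [ij ->]]] QR k.
case: eqP => [-> | _]; last exact: QR.
rewrite -(fixedQ i j ij) setISS ?QR //.
apply: subset_trans (proj_weaken ij (neQ i)) _.
exact: morph_setU_subset (HW.1.2 i j ij).1 _ _ (QR i).
Qed.

Lemma aclosure_weaken_sup (E : finType) (Q N N' : E -> E -> multirel T) :
  nsym Q -> nfixed alg P Q -> (forall a b, a != b -> forall i, Q a b i != set0) ->
  clos_refl_trans _ (nstep alg P' (E:=E)) N N' -> nsub Q N -> nsub Q N'.
Proof.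
move=> symQ [pfixedQ compfixedQ] neQ; apply: clos_rt_invariant => N1 N2.
case=> [[x [z [R [xz [[reach _] ->]]]]] | [x [y [z [xy yz xz ->]]]]] QN;
  apply: nupd_sup => //.
  exact: pclosure_weaken_sup (pfixedQ x z xz) (neQ x z xz) reach (QN x z).
move=> i; rewrite -(compfixedQ x y z xy yz xz).
exact: setISS (QN x z i) (comp_subset (Halg i) (QN x y i) (QN y z i)).
Qed.

End Weakening.
End Networks.

Theorem proposition6p27 (m : nat) (T : 'I_m -> finType) (alg : forall i, nalg (T i))
  (P P' : projs T) (U : Type) (phi : multirel T -> U -> U -> Prop)
  (S : multirel T -> Prop) :
  seq_formalism alg P phi ->
  weakening alg P P' ->
  alg_tractable alg P' phi S ->
  alg_tractable alg P phi S.
Proof.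
move=> HF HW tractableP' E N netN N' [reachN' fixedN'].
have symN : nsym alg N by move=> x y xy; apply: (netN x y xy).2.
split=> [satN | consistentN']; first exact: (aclosure_sound HF satN reachN').
have neN' : forall a b, a != b -> forall i, N' a b i != set0.
  move=> a b ab i; apply/eqP => N'ab0.
  by apply: consistentN'; exists a, b; split=> //; exists i.
have [symN' subN'N] := aclosure_sym_sub HF.1.1 reachN' symN.
have [N'' [reachN'' fixedN'']] := aclosure_exists HW.1.1 P' symN.
apply/(tractableP' E N netN N'' (conj reachN'' fixedN'')) => - [x [y [xy [i N''xy0]]]].
have := aclosure_weaken_sup HF.1.1 HF.1 HW symN' fixedN' neN' reachN'' subN'N x y i.
by rewrite N''xy0 subset0; apply/negP/neN'.
Qed.
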